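(* Let $\Gamma$ be a compact and connected metric graph. (i) A vector bundle on $\Gamma$ is stable if and only if it is indecomposable. (ii) A vector bundle $E$ decomposing as $E=E_1\oplus\cdots\oplus E_r$ with all $E_i$ indecomposable is semistable if and only if $\mu(E_1)=\cdots=\mu(E_r)$.
   Context: A vector bundle of rank $n$ on a metric graph $\Gamma$ is a torsor under $S_n\ltimes\mathcal{H}_\Gamma^n$ ($\mathcal{H}_\Gamma$ = harmonic functions: piecewise linear with integer slopes and zero Laplacian). With respect to an oriented simple model and its star cover, it is given by transition matrices over $\mathbb{T}=\mathbb{R}\cup\{\infty\}$ with exactly one finite entry per row and column, finite entries affine with integer slope on the edge; isomorphism classes correspond to cohomology classes. Direct sum = block-diagonal transition matrices; degree = sum over edges of the slopes of all finite entries; slope $\mu(E)=\deg E/\mathrm{rk}E$. A rank-$m$ bundle $F$ is a subbundle of $E$ if transition matrices can be chosen with those of $E$ in block form $\begin{bmatrix} h^e&\ast\\ \infty&\ast\end{bmatrix}$, $h^e$ those of $F$. $E$ is semistable if $\mu(F)\le\mu(E)$ for all subbundles $F$, and stable if $\mu(F)<\mu(E)$ for all proper nonzero subbundles. Indecomposable means not isomorphic to a direct sum of two bundles of positive rank. *)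

From HB Require Import structures.
From mathcomp Require Import all_boot all_order all_algebra all_fingroup.
From mathcomp Require Import reals.
Set Implicit Arguments.
Unset Strict Implicit.
Unset Printing Implicit Defensive.
Import Order.TTheory GRing.Theory Num.Theory.
Local Open Scope ring_scope.

Section TropBundles.
Variable R : realType.

(* A point of the open edge e is
   described by its parameter t in (0, len e), the distance from src e. *)
Record model := Model {
  vert : finType;
  edge : finType;
  src : edge -> vert;
  tgt : edge -> vert;
  len : edge -> R }.
Arguments src {m} e.
Arguments tgt {m} e.
Arguments len {m} e.

Definition adjacent (G : model) : rel (vert G) := fun u v =>
  [exists e : edge G, ((src e == u) && (tgt e == v)) || ((src e == v) && (tgt e == u))].

(* Every compact connected metric graph admits such a model. *)
Definition simple_connected_model (G : model) : Prop :=
  [/\ forall e : edge G, 0 < len e,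
      forall e : edge G, src e != tgt e,
      forall e e' : edge G,
        ((src e == src e') && (tgt e == tgt e')) ||
        ((src e == tgt e') && (tgt e == src e')) -> e = e',
      forall u v : vert G, connect (@adjacent G) u v
    & (0 < #|vert G|)%N].

(* Tropical numbers T = R u {oo}, encoded as option R (None = oo),
   tropical addition = min, tropical multiplication = +.               *)
Definition tplus (x y : option R) : option R :=
  match x, y with
  | None, _ => y
  | _, None => x
  | Some a, Some b => Some (Num.min a b)
  end.
Definition ttimes (x y : option R) : option R :=
  match x, y with Some a, Some b => Some (a + b) | _, _ => None end.

Definition tmx (n : nat) := 'I_n -> 'I_n -> option R.
Definition tmul (n : nat) (A B : tmx n) : tmx n := fun i j =>
  \big[tplus/None]_(k < n) ttimes (A i k) (B k j).
(* inverse of an (invertible = monomial) tropical matrix *)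
Definition tinv (n : nat) (A : tmx n) : tmx n := fun i j => omap -%R (A j i).

(* A transition matrix on an edge: a tropical matrix with exactly one
   finite entry per row and column (row i has its finite entry in
   column tperm i), the finite entry of row i being the affine function
   t |-> toff i + tslope i * t of integer slope.                       *)
Record tmono (n : nat) := TMono {
  tperm : 'S_n;
  toff : 'I_n -> R;
  tslope : 'I_n -> int }.

Definition tentry (n : nat) (g : tmono n) (t : R) : tmx n := fun i j =>
  if tperm g i == j then Some (toff g i + (tslope g i)%:~R * t) else None.

Variable G : model.

(* transition data (a Cech 1-cochain = cocycle, the star cover of a
   simple model having no triple intersections) of a rank n bundle *)
Definition cocycle (n : nat) := edge G -> tmono n.

(* A section of S_n |x H^n over the open star U_v of v: a permutation and
   n harmonic functions on U_v.  A harmonic function on U_v (piecewise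
   linear, integer slopes, zero Laplacian) is affine on every incident
   open edge and continuous at v; it is given by its value at v and its
   outgoing integer slope along each incident edge, these slopes summing
   to zero (zero Laplacian at v).                                       *)
Record hsec (n : nat) := HSec {
  hperm : 'S_n;
  hval : 'I_n -> R;
  hslope : 'I_n -> edge G -> int }.

Definition harmonic_sec (n : nat) (v : vert G) (phi : hsec n) : Prop :=
  forall i, \sum_(e : edge G | (src e == v) || (tgt e == v)) hslope phi i e = 0.

Definition hrestr (n : nat) (v : vert G) (phi : hsec n) (e : edge G) (i : 'I_n)
  (t : R) : R :=
  if src e == v then hval phi i + (hslope phi i e)%:~R * t
  else hval phi i + (hslope phi i e)%:~R * (len e - t).

Definition hentry (n : nat) (v : vert G) (phi : hsec n) (e : edge G) (t : R)
  : tmx n := fun i j =>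
  if hperm phi i == j then Some (hrestr v phi e i t) else None.

Definition cohomologous (n : nat) (g g' : cocycle n) : Prop :=
  exists phi : vert G -> hsec n,
    (forall v, harmonic_sec v (phi v)) /\
    forall (e : edge G) (t : R), 0 < t < len e ->
      tentry (g' e) t =
      tmul (tmul (hentry (src e) (phi (src e)) e t) (tentry (g e) t))
           (tinv (hentry (tgt e) (phi (tgt e)) e t)).

Definition bundle := {n : nat & cocycle n}.
Definition rk (E : bundle) : nat := tag E.
Definition deg (E : bundle) : int :=
  \sum_(e : edge G) \sum_(i < rk E) tslope (tagged E e) i.
Definition slope (E : bundle) : rat := (deg E)%:~R / (rk E)%:R.

Definition castc (m n : nat) (H : m = n) (g : cocycle m) : cocycle n :=
  eq_rect m cocycle g n H.

Definition iso (E F : bundle) : Prop :=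
  exists H : rk E = rk F, cohomologous (castc H (tagged E)) (tagged F).

Definition psum_fun (m k : nat) (s : 'S_m) (s' : 'S_k) (i : 'I_(m + k))
  : 'I_(m + k) :=
  unsplit (match split i with inl j => inl (s j) | inr j => inr (s' j) end).

Lemma psum_inj (m k : nat) (s : 'S_m) (s' : 'S_k) : injective (psum_fun s s').
Proof.
move=> i j; rewrite /psum_fun => /(can_inj unsplitK).
case: (split i) (splitK i) => a <-; case: (split j) (splitK j) => b <- //=.
- by move=> [/perm_inj ->].
- by move=> [/perm_inj ->].
Qed.

Definition psum (m k : nat) (s : 'S_m) (s' : 'S_k) : 'S_(m + k) :=
  perm (@psum_inj m k s s').

Definition tsum (m k : nat) (g : tmono m) (h : tmono k) : tmono (m + k) :=
  TMono (psum (tperm g) (tperm h))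
    (fun i => match split i with inl j => toff g j | inr j => toff h j end)
    (fun i => match split i with inl j => tslope g j | inr j => tslope h j end).

Definition dsum (E F : bundle) : bundle :=
  existT _ (rk E + rk F)%N (fun e => tsum (tagged E e) (tagged F e)).

Definition zero_bundle : bundle :=
  existT _ 0%N (fun _ => TMono (1 : 'S_0) (fun _ => 0) (fun _ => 0)).

Fixpoint dsum_fam (r : nat) : ('I_r -> bundle) -> bundle :=
  match r with
  | 0 => fun _ => zero_bundle
  | r'.+1 => fun Es => dsum (Es ord0) (dsum_fam (fun i : 'I_r' => Es (lift ord0 i)))
  end.

(* F (rank m) is a subbundle of E (rank n): transition matrices can be
   chosen with those of E of block form [[h, *], [oo, *]], with h those
   of F (upper-left m x m block = h, lower-left (n-m) x m block = oo). *)
Definition subbundle (F E : bundle) : Prop :=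
  exists (Hmn : (rk F <= rk E)%N) (g' : cocycle (rk E)) (h : cocycle (rk F)),
    [/\ cohomologous (tagged E) g', cohomologous (tagged F) h &
      forall (e : edge G) (t : R), 0 < t < len e ->
        (forall i j : 'I_(rk F),
            tentry (g' e) t (widen_ord Hmn i) (widen_ord Hmn j) = tentry (h e) t i j) /\
        (forall (i : 'I_(rk E)) (j : 'I_(rk F)), (rk F <= i)%N ->
            tentry (g' e) t i (widen_ord Hmn j) = None)].

Definition semistable (E : bundle) : Prop :=
  forall F : bundle, (0 < rk F)%N -> subbundle F E -> slope F <= slope E.

Definition stable (E : bundle) : Prop :=
  forall F : bundle, (0 < rk F < rk E)%N -> subbundle F E -> slope F < slope E.

Definition indecomposable (E : bundle) : Prop :=
  ~ exists E1 E2 : bundle, [/\ (0 < rk E1)%N, (0 < rk E2)%N & iso E (dsum E1 E2)].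

End TropBundles.

Lemma tsum_block (R : realType) (m k : nat) (g : tmono R m) (h : tmono R k) t :
  (forall i j, tentry (tsum g h) t (lshift k i) (lshift k j) = tentry g t i j) /\
  (forall i j, tentry (tsum g h) t (rshift m i) (rshift m j) = tentry h t i j) /\
  (forall i j, tentry (tsum g h) t (lshift k i) (rshift m j) = None) /\
  (forall i j, tentry (tsum g h) t (rshift m i) (lshift k j) = None).
Proof.
rewrite /tentry /= /psum; split; [|split; [|split]] => i j; rewrite permE /psum_fun.
- by rewrite /= ?(unsplitK (inl _)) /= (inj_eq (@lshift_inj _ _)).
- by rewrite ?(unsplitK (inr _)) /= (inj_eq (@rshift_inj _ _)).
- rewrite (unsplitK (inl _)) /=; case: eqP => // /(congr1 val) /= H.
  by have := ltn_ord (tperm g i); rewrite H ltnNge leq_addr.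
- rewrite (unsplitK (inr _)) /=; case: eqP => // /(congr1 val) /= H.
  by have := ltn_ord j; rewrite -H ltnNge leq_addr.
Qed.

From HB Require Import structures.
From mathcomp Require Import all_boot all_order all_algebra all_fingroup.
From mathcomp Require Import reals ring lra zify.
From mathcomp Require Import boolp.
(* Imported last, so that its field [tperm] shadows the transposition of perm.v. *)
Set Implicit Arguments.
Unset Strict Implicit.
Unset Printing Implicit Defensive.
Import Order.TTheory GRing.Theory Num.Theory.
Local Open Scope ring_scope.

(* Transition matrices are monomial, so a subbundle of a bundle of rank n
   amounts to a family of index sets T_v, one per vertex, carried onto each
   other by the transition permutations; by connectedness all T_v have the same
   size m.  Conjugating by permutations moves every T_v to {0, ..., m-1}, after
   which the transition data is block diagonal: an invariant family of size m
   splits off a direct summand of rank m.  Gauge transformations by harmonic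
   sections do not change the degree of an invariant family, because around
   every vertex the slopes of a harmonic function sum to zero.  Hence a bundle
   has a proper subbundle iff it decomposes, which gives (i) once the slopes of
   the two summands are compared with their mediant mu(E).  For (ii), an
   invariant family of a sum of indecomposables meets each summand in nothing
   or everything, so its slope is the common slope; conversely each summand is
   a subbundle, and mu(E) is the rank-weighted mean of the slopes of the
   summands. *)

Section Numbers.
Variable R : realFieldType.

Lemma affine_eq_slope (a b c d L : R) : 0 < L ->
  (forall t, 0 < t < L -> a + b * t = c + d * t) -> b = d.
Proof.
move=> L_gt0 eq_ab.
have E2 := eq_ab (L / 4 * 2) ltac:(apply/andP; split; lra).
have E1 := eq_ab (L / 4) ltac:(apply/andP; split; lra).
apply: (@mulIf _ (L / 4)); first by rewrite gt_eqF // divr_gt0.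
have quarter (x y : R) : x * (L / 4) = (y + x * (L / 4 * 2)) - (y + x * (L / 4)) by ring.
by rewrite (quarter b a) (quarter d c) E2 E1.
Qed.

Lemma mediant_lt (x y a b : R) : 0 < a -> 0 < b ->
  x / a < (x + y) / (a + b) -> (x + y) / (a + b) < y / b.
Proof.
move=> a_gt0 b_gt0; have ab_gt0 : 0 < a + b by rewrite addr_gt0.
rewrite ltr_pdivrMr // mulrAC ltr_pdivlMr // => lt_xy.
rewrite ltr_pdivrMr // mulrAC ltr_pdivlMr //; nra.
Qed.

Lemma eq_of_weighted_mean (I : finType) (w x : I -> R) mu :
  (forall i, 0 < w i) -> (forall i, x i <= mu) ->
  \sum_i x i * w i = mu * \sum_i w i -> forall i, x i = mu.
Proof.
move=> w_gt0 x_le mean i.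
have nneg j : true -> 0 <= (mu - x j) * w j.
  by move=> _; rewrite mulr_ge0 ?subr_ge0 // ltW.
have sum0 : \sum_j (mu - x j) * w j = 0.
  by rewrite (eq_bigr _ (fun j _ => mulrBl _ _ _)) sumrB -mulr_sumr mean subrr.
have /eqP := @psumr_eq0P _ _ _ _ nneg sum0 i isT.
by rewrite mulf_eq0 (gt_eqF (w_gt0 i)) orbF subr_eq0 => /eqP.
Qed.

End Numbers.

Lemma split_lshift m k (i : 'I_m) : split (lshift k i) = inl i.
Proof. exact: (unsplitK (inl i)). Qed.

Lemma split_rshift m k (j : 'I_k) : split (rshift m j) = inr j.
Proof. exact: (unsplitK (inr j)). Qed.

Variant shift_spec m k : 'I_(m + k) -> 'I_m + 'I_k -> bool -> Type :=
  | ShiftL (j : 'I_m) : shift_spec (lshift k j) (inl j) true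
  | ShiftR (j : 'I_k) : shift_spec (rshift m j) (inr j) false.

Lemma shiftP m k (i : 'I_(m + k)) : shift_spec i (split i) (i < m)%N.
Proof.
case: splitP => j Ej.
- by rewrite (_ : i = lshift k j); [constructor | apply: val_inj].
- by rewrite (_ : i = rshift m j); [constructor | apply: val_inj].
Qed.

Lemma perm_onto_prefix n (A : {set 'I_n}) :
  exists p : 'S_n, forall i, (p i \in A) = (i < #|A|)%N.
Proof.
pose s := enum A ++ enum (~: A).
have size_s : size s = n by rewrite size_cat -!cardE cardsC card_ord.
have uniq_s : uniq s.
  rewrite cat_uniq !enum_uniq andbT /=; apply/hasPn => x.
  by rewrite !mem_enum inE => /negbTE ->.
have nth_inj : injective (fun i : 'I_n => nth i s i).
  move=> i j /=; rewrite [nth j s j](set_nth_default i); last by rewrite size_s.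
  by move/eqP; rewrite nth_uniq ?size_s // => /eqP /val_inj.
exists (perm nth_inj) => i; rewrite permE nth_cat -cardE.
case: ifP => lt_iA; first by rewrite -mem_enum mem_nth // -cardE.
have : nth i (enum (~: A)) (i - #|A|) \in enum (~: A).
  apply: mem_nth; rewrite -cardE.
  move: lt_iA (ltn_ord i) (cardsC A); rewrite card_ord; move: #|A| #|~: A| => a c; lia.
by rewrite mem_enum inE => /negbTE.
Qed.

Lemma psum_of_prefix_stable m k (s : 'S_(m + k)) :
  (forall i, (s i < m)%N = (i < m)%N) -> exists s1 s2, s = psum s1 s2.
Proof.
move=> s_prefix.
have lo (i : 'I_m) : {j : 'I_m | s (lshift k i) = lshift k j}.
  have : (s (lshift k i) < m)%N by rewrite s_prefix /= ltn_ord.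
  by case: (shiftP (s (lshift k i))) => // j _; exists j.
have hi (i : 'I_k) : {j : 'I_k | s (rshift m i) = rshift m j}.
  have : (s (rshift m i) < m)%N = false by rewrite s_prefix /= ltnNge leq_addr.
  by case: (shiftP (s (rshift m i))) => // j _; exists j.
have lo_inj : injective (fun i => sval (lo i)).
  move=> i i' /= E; apply/lshift_inj/(@perm_inj _ s).
  by rewrite (svalP (lo i)) (svalP (lo i')) E.
have hi_inj : injective (fun i => sval (hi i)).
  move=> i i' /= E; apply/rshift_inj/(@perm_inj _ s).
  by rewrite (svalP (hi i)) (svalP (hi i')) E.
exists (perm lo_inj), (perm hi_inj); apply/permP => i.
rewrite permE /psum_fun; case: shiftP => j; rewrite permE.
- exact: svalP (lo j).
- exact: svalP (hi j).
Qed.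

Section Tropical.
Variable R : realType.

Lemma big_tplus_only (I : finType) (F : I -> option R) k0 :
  (forall k, k != k0 -> F k = None) -> \big[@tplus R/None]_k F k = F k0.
Proof.
move=> F_none.
suff in_seq s : \big[@tplus R/None]_(k <- s) F k = if k0 \in s then F k0 else None.
  by rewrite in_seq mem_index_enum.
elim: s => [|a s IH]; first by rewrite big_nil.
rewrite big_cons IH in_cons; case: (eqVneq a k0) => [->|ne] /=.
  by case: (k0 \in s); case: (F k0) => //= x; rewrite minxx.
by rewrite F_none //; case: (k0 \in s).
Qed.

Definition tval n (g : tmono R n) i (t : R) := toff g i + (tslope g i)%:~R * t.

Lemma isSome_tentry n (g : tmono R n) t i j : isSome (tentry g t i j) = (tperm g i == j).
Proof. by rewrite /tentry; case: eqP. Qed.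

Lemma tentry_tslope n1 n2 (g1 : tmono R n1) (g2 : tmono R n2) (L : R) i1 i2 j1 :
  0 < L -> (forall t, 0 < t < L -> tentry g1 t i1 j1 = tentry g2 t i2 (tperm g2 i2)) ->
  tslope g1 i1 = tslope g2 i2.
Proof.
move=> L_gt0 eq_entry; apply: (@intr_inj R).
apply: (affine_eq_slope (a := toff g1 i1) (c := toff g2 i2) L_gt0) => t t_in.
by move: (eq_entry t t_in); rewrite /tentry eqxx; case: eqP => // _ [].
Qed.

Lemma tsum_lshift a b (g : tmono R a) (h : tmono R b) x :
  [/\ tperm (tsum g h) (lshift b x) = lshift b (tperm g x),
      toff (tsum g h) (lshift b x) = toff g x &
      tslope (tsum g h) (lshift b x) = tslope g x].
Proof. by rewrite /= permE /psum_fun !split_lshift. Qed.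

Lemma tsum_rshift a b (g : tmono R a) (h : tmono R b) y :
  [/\ tperm (tsum g h) (rshift a y) = rshift a (tperm h y),
      toff (tsum g h) (rshift a y) = toff h y &
      tslope (tsum g h) (rshift a y) = tslope h y].
Proof. by rewrite /= permE /psum_fun !split_rshift. Qed.

End Tropical.

Section Bundles.
Variables (R : realType) (G : model R).

Lemma conj_tentryE n (phi psi : hsec G n) (g : tmono R n) v w e t i j :
  tmul (tmul (hentry v phi e t) (tentry g t)) (tinv (hentry w psi e t)) i j =
  if hperm psi j == tperm g (hperm phi i) then
    Some (hrestr v phi e i t + tval g (hperm phi i) t - hrestr w psi e j t)
  else None.
Proof.
have hentry_none k l : l != hperm phi k -> hentry v phi e t k l = None.
  by rewrite /hentry eq_sym => /negbTE ->.
have inner k : \big[@tplus R/None]_l ttimes (hentry v phi e t i l) (tentry g t l k)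
    = ttimes (hentry v phi e t i (hperm phi i)) (tentry g t (hperm phi i) k).
  by apply: big_tplus_only => l nl; rewrite hentry_none.
rewrite /tmul (big_tplus_only (k0 := tperm g (hperm phi i))) => [|k nk]; rewrite inner.
  by rewrite /hentry /tentry /tinv !eqxx /=; case: eqP.
by rewrite /tentry eq_sym (negbTE nk); case: hentry.
Qed.

Hypothesis len_gt0 : forall e : edge G, 0 < len e.
Hypothesis src_neq_tgt : forall e : edge G, src e != tgt e.

(* [g' e = phi_(src e) (.) g e (.) phi_(tgt e)^-1], read off entry by entry. *)
Definition gauge n (phi : vert G -> hsec G n) (g g' : cocycle G n) :=
  forall e : edge G,
  (forall i, hperm (phi (tgt e)) (tperm (g' e) i) = tperm (g e) (hperm (phi (src e)) i)) /\
  (forall t, 0 < t < len e -> forall i, tval (g' e) i t =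
     hrestr (src e) (phi (src e)) e i t + tval (g e) (hperm (phi (src e)) i) t
     - hrestr (tgt e) (phi (tgt e)) e (tperm (g' e) i) t).

Lemma mid_in_edge (e : edge G) : 0 < len e / 2 < len e.
Proof. by have := len_gt0 e => ?; apply/andP; split; lra. Qed.

Lemma cohomologousP n (g g' : cocycle G n) :
  cohomologous g g' <-> exists phi, (forall v, harmonic_sec v (phi v)) /\ gauge phi g g'.
Proof.
split=> [[phi [harm eq_g]]|[phi [harm gau]]]; exists phi; split => // e.
  have entry t (t_in : 0 < t < len e) i :=
    congr1 (fun M => M i (tperm (g' e) i)) (eq_g e t t_in).
  split=> [i|t t_in i].
  - by move: (entry _ (mid_in_edge e) i); rewrite conj_tentryE /tentry eqxx; case: eqP.
  - move: (entry t t_in i); rewrite conj_tentryE /tentry /tval eqxx.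
    by case: eqP => // _ [->].
move=> t t_in; have [perm_eq val_eq] := gau e.
apply: funext => i; apply: funext => j.
rewrite conj_tentryE /tentry -perm_eq (inj_eq perm_inj) [j == _]eq_sym.
by case: eqP => // <-; rewrite -val_eq.
Qed.

Lemma gauge_tslope n phi (g g' : cocycle G n) : gauge phi g g' -> forall e i,
  tslope (g' e) i = hslope (phi (src e)) i e + tslope (g e) (hperm (phi (src e)) i)
     + hslope (phi (tgt e)) (tperm (g' e) i) e.
Proof.
move=> gau e i; have [_ val_eq] := gau e; apply: (@intr_inj R); rewrite !rmorphD /=.
apply: (affine_eq_slope (a := toff (g' e) i)
  (c := hval (phi (src e)) i + toff (g e) (hperm (phi (src e)) i)
        - hval (phi (tgt e)) (tperm (g' e) i)
        - (hslope (phi (tgt e)) (tperm (g' e) i) e)%:~R * len e) (len_gt0 e)) => t t_in.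
move: (val_eq t t_in i); rewrite /tval /hrestr eqxx (negbTE (src_neq_tgt e)) => ->.
ring.
Qed.

Definition invariant n (g : cocycle G n) (S : vert G -> {set 'I_n}) :=
  forall e i, (i \in S (src e)) = (tperm (g e) i \in S (tgt e)).

Definition subdeg n (g : cocycle G n) (S : vert G -> {set 'I_n}) : int :=
  \sum_(e : edge G) \sum_(i in S (src e)) tslope (g e) i.

Definition transport n (phi : vert G -> hsec G n) (S : vert G -> {set 'I_n}) v :=
  (hperm (phi v))^-1%g @^-1: S v.

Lemma mem_transport n (phi : vert G -> hsec G n) S v i :
  (hperm (phi v) i \in transport phi S v) = (i \in S v).
Proof. by rewrite inE permK. Qed.

Lemma card_transport n (phi : vert G -> hsec G n) S v : #|transport phi S v| = #|S v|.
Proof. exact/card_preimset/perm_inj. Qed.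

Lemma invariant_transport n phi (g g' : cocycle G n) S :
  gauge phi g g' -> invariant g' S <-> invariant g (transport phi S).
Proof.
move=> gau; split=> S_inv e i; last first.
  by rewrite -(mem_transport phi S) S_inv -(proj1 (gau e)) mem_transport.
rewrite -[i](permKV (hperm (phi (src e)))) mem_transport -(proj1 (gau e)).
by rewrite mem_transport S_inv.
Qed.

Lemma sum_incident (f : vert G -> edge G -> int) e :
  \sum_(v | (src e == v) || (tgt e == v)) f v e = f (src e) e + f (tgt e) e.
Proof.
rewrite (bigD1 (src e)) ?eqxx //= (bigD1 (tgt e)) /=; last first.
  by rewrite eqxx orbT eq_sym src_neq_tgt.
rewrite big1 ?addr0 // => v; rewrite -!andbA => /and3P [/orP[] /eqP-> ].
  by rewrite eqxx.
by move=> _; rewrite eqxx.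
Qed.

(* Each edge is counted once at each endpoint, so the sum regroups vertex by
   vertex into the Laplacians of the harmonic functions, which vanish. *)
Lemma sum_harmonic_slopes n (phi : vert G -> hsec G n) (S : vert G -> {set 'I_n}) :
  (forall v, harmonic_sec v (phi v)) ->
  \sum_(e : edge G) (\sum_(i in S (src e)) hslope (phi (src e)) i e
                     + \sum_(i in S (tgt e)) hslope (phi (tgt e)) i e) = 0.
Proof.
move=> harm; pose f v e := \sum_(i in S v) hslope (phi v) i e.
under eq_bigr => e _ do rewrite -/(f _ e) -/(f _ e) -sum_incident big_mkcond.
rewrite exchange_big /=; apply: big1 => v _.
rewrite -big_mkcond /= /f exchange_big /=; apply: big1 => i _.
exact: harm.
Qed.

Lemma subdeg_transport n phi (g g' : cocycle G n) S :
  (forall v, harmonic_sec v (phi v)) -> gauge phi g g' -> invariant g' S ->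
  subdeg g' S = subdeg g (transport phi S).
Proof.
move=> harm gau S_inv; rewrite /subdeg.
have src_sum e : \sum_(i in S (src e)) tslope (g e) (hperm (phi (src e)) i)
    = \sum_(k in transport phi S (src e)) tslope (g e) k.
  rewrite [RHS](reindex_inj (@perm_inj _ (hperm (phi (src e))))).
  by apply: eq_bigl => i; rewrite mem_transport.
have tgt_sum e : \sum_(i in S (src e)) hslope (phi (tgt e)) (tperm (g' e) i) e
    = \sum_(j in S (tgt e)) hslope (phi (tgt e)) j e.
  rewrite [RHS](reindex_inj (@perm_inj _ (tperm (g' e)))).
  by apply: eq_bigl => i; rewrite S_inv.
rewrite -[RHS]addr0 -[X in _ + X](sum_harmonic_slopes S harm) -big_split /=.
apply: eq_bigr => e _; rewrite -src_sum -tgt_sum -!big_split /=.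
by apply: eq_bigr => i _; rewrite (gauge_tslope gau); ring.
Qed.

Definition full_fam n : vert G -> {set 'I_n} := fun _ => setT.
Definition empty_fam n : vert G -> {set 'I_n} := fun _ => set0.

Lemma invariant_full n (g : cocycle G n) : invariant g (full_fam n).
Proof. by move=> e i; rewrite !inE. Qed.

Lemma invariant_empty n (g : cocycle G n) : invariant g (empty_fam n).
Proof. by move=> e i; rewrite !inE. Qed.

Lemma subdeg_full (E : bundle G) : subdeg (tagged E) (full_fam (rk E)) = deg E.
Proof. by apply: eq_bigr => e _; apply: eq_bigl => i; rewrite inE. Qed.

Lemma subdeg_empty n (g : cocycle G n) : subdeg g (empty_fam n) = 0.
Proof. by apply: big1 => e _; rewrite big_set0. Qed.

Lemma transport_full n (phi : vert G -> hsec G n) : transport phi (full_fam n) = full_fam n.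
Proof. by apply: funext => v; apply/setP => k; rewrite !inE. Qed.

Lemma cohomologous_deg n (g g' : cocycle G n) :
  cohomologous g g' -> deg (existT _ n g) = deg (existT _ n g').
Proof.
case/cohomologousP => phi [harm gau].
rewrite -!subdeg_full /= (subdeg_transport harm gau (invariant_full _)).
by rewrite transport_full.
Qed.

Definition perm_sec n (p : 'S_n) : hsec G n := HSec p (fun _ => 0) (fun _ _ => 0).

Lemma harmonic_perm_sec n v (p : 'S_n) : harmonic_sec v (perm_sec p).
Proof. by move=> i; rewrite big1. Qed.

Lemma hrestr_perm_sec n (p : 'S_n) v e i t : hrestr v (perm_sec p) e i t = 0.
Proof. by rewrite /hrestr /=; case: ifP => _; rewrite mulr0z mul0r addr0. Qed.

Definition permute n (pi : vert G -> 'S_n) (g : cocycle G n) : cocycle G n := fun e =>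
  TMono (pi (src e) * tperm (g e) * (pi (tgt e))^-1)%g
    (fun i => toff (g e) (pi (src e) i)) (fun i => tslope (g e) (pi (src e) i)).

Lemma gauge_permute n (pi : vert G -> 'S_n) g :
  gauge (fun v => perm_sec (pi v)) g (permute pi g).
Proof.
move=> e; split=> [i|t _ i] /=; first by rewrite !permM permKV.
by rewrite !hrestr_perm_sec /tval /= add0r subr0.
Qed.

Lemma cohomologous_permute n (pi : vert G -> 'S_n) g : cohomologous g (permute pi g).
Proof.
apply/cohomologousP; exists (fun v => perm_sec (pi v)).
by split=> [v|]; [exact: harmonic_perm_sec | exact: gauge_permute].
Qed.

Lemma cohomologous_refl n (g : cocycle G n) : cohomologous g g.
Proof.
apply/cohomologousP; exists (fun _ => perm_sec 1); split=> [v|e].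
  exact: harmonic_perm_sec.
by split=> [i|t _ i]; rewrite /= ?perm1 // !hrestr_perm_sec add0r subr0.
Qed.

Definition lfam a b (U : vert G -> {set 'I_(a + b)}) v := [set x | lshift b x \in U v].
Definition rfam a b (U : vert G -> {set 'I_(a + b)}) v := [set y | rshift a y \in U v].
Definition cat_fam a b (UA : vert G -> {set 'I_a}) (UB : vert G -> {set 'I_b}) v :=
  [set i | match split i with inl x => x \in UA v | inr y => y \in UB v end].

Lemma lfam_cat a b UA UB : lfam (@cat_fam a b UA UB) = UA.
Proof. by apply: funext => v; apply/setP => x; rewrite !inE split_lshift. Qed.

Lemma rfam_cat a b UA UB : rfam (@cat_fam a b UA UB) = UB.
Proof. by apply: funext => v; apply/setP => y; rewrite !inE split_rshift. Qed.

Lemma card_lrfam a b (U : vert G -> {set 'I_(a + b)}) v :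
  #|U v| = (#|lfam U v| + #|rfam U v|)%N.
Proof.
rewrite -!sum1_card big_split_ord; congr (_ + _)%N.
all: by apply: eq_bigl => x; rewrite inE.
Qed.

Lemma card_cat a b UA UB v : #|@cat_fam a b UA UB v| = (#|UA v| + #|UB v|)%N.
Proof. by rewrite card_lrfam lfam_cat rfam_cat. Qed.

Lemma invariant_lrfam (A B : bundle G) U : invariant (tagged (dsum A B)) U ->
  invariant (tagged A) (lfam U) /\ invariant (tagged B) (rfam U).
Proof.
move=> U_inv; split=> e x; rewrite !inE U_inv /=.
  by have [-> _ _] := tsum_lshift (tagged A e) (tagged B e) x.
by have [-> _ _] := tsum_rshift (tagged A e) (tagged B e) x.
Qed.

Lemma invariant_cat (A B : bundle G) UA UB :
  invariant (tagged A) UA -> invariant (tagged B) UB ->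
  invariant (tagged (dsum A B)) (cat_fam UA UB).
Proof.
move=> UA_inv UB_inv e i; rewrite !inE /=; case: shiftP => x.
  by have [-> _ _] := tsum_lshift (tagged A e) (tagged B e) x; rewrite split_lshift UA_inv.
by have [-> _ _] := tsum_rshift (tagged A e) (tagged B e) x; rewrite split_rshift UB_inv.
Qed.

Lemma subdeg_dsum (A B : bundle G) U : subdeg (tagged (dsum A B)) U =
  subdeg (tagged A) (lfam U) + subdeg (tagged B) (rfam U).
Proof.
rewrite /subdeg -big_split; apply: eq_bigr => e _ /=.
rewrite big_split_ord; congr (_ + _); apply: eq_big => x; rewrite ?inE // => _.
  by rewrite split_lshift.
by rewrite split_rshift.
Qed.

Lemma subdeg_cat (A B : bundle G) UA UB :
  subdeg (tagged (dsum A B)) (cat_fam UA UB) = subdeg (tagged A) UA + subdeg (tagged B) UB.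
Proof. by rewrite subdeg_dsum lfam_cat rfam_cat. Qed.

Lemma deg_dsum (A B : bundle G) : deg (dsum A B) = deg A + deg B.
Proof.
rewrite -!subdeg_full -subdeg_cat; congr subdeg.
by apply: funext => v; apply/setP => i; rewrite !inE; case: split => x; rewrite inE.
Qed.

Definition prefix_fam a b := cat_fam (full_fam a) (empty_fam b).
Definition suffix_fam a b := cat_fam (empty_fam a) (full_fam b).

Lemma mem_prefix a b v (i : 'I_(a + b)) : (i \in prefix_fam a b v) = (i < a)%N.
Proof. by rewrite inE; case: shiftP => x; rewrite inE. Qed.

Lemma card_prefix a b v : #|prefix_fam a b v| = a.
Proof. by rewrite card_cat cardsT cards0 card_ord addn0. Qed.

Lemma card_suffix a b v : #|suffix_fam a b v| = b.
Proof. by rewrite card_cat cardsT cards0 card_ord. Qed.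

Lemma invariant_prefix (A B : bundle G) :
  invariant (tagged (dsum A B)) (prefix_fam (rk A) (rk B)).
Proof. exact/invariant_cat/invariant_empty/invariant_full. Qed.

Lemma invariant_suffix (A B : bundle G) :
  invariant (tagged (dsum A B)) (suffix_fam (rk A) (rk B)).
Proof. exact/invariant_cat/invariant_full/invariant_empty. Qed.

Lemma subdeg_prefix (A B : bundle G) :
  subdeg (tagged (dsum A B)) (prefix_fam (rk A) (rk B)) = deg A.
Proof. by rewrite subdeg_cat subdeg_full subdeg_empty addr0. Qed.

Lemma subdeg_suffix (A B : bundle G) :
  subdeg (tagged (dsum A B)) (suffix_fam (rk A) (rk B)) = deg B.
Proof. by rewrite subdeg_cat subdeg_full subdeg_empty add0r. Qed.

Lemma prefix_invariant_dsum m k (g : cocycle G (m + k)) :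
  invariant g (prefix_fam m k) ->
  exists g1 g2, g = tagged (dsum (existT _ m g1) (existT _ k g2)).
Proof.
move=> g_inv.
have /fin_all_exists [s12 tperm_g] :
    forall e, exists s : 'S_m * 'S_k, tperm (g e) = psum s.1 s.2.
  move=> e; have s_prefix i : (tperm (g e) i < m)%N = (i < m)%N.
    by rewrite -(mem_prefix (tgt e)) -(mem_prefix (src e)) (g_inv e i).
  by have [s1 [s2 ->]] := psum_of_prefix_stable s_prefix; exists (s1, s2).
exists (fun e => TMono (s12 e).1
  (fun i => toff (g e) (lshift k i)) (fun i => tslope (g e) (lshift k i))).
exists (fun e => TMono (s12 e).2
  (fun j => toff (g e) (rshift m j)) (fun j => tslope (g e) (rshift m j))).
apply: funext => e /=; case: (g e) (tperm_g e) => p o s /= ->.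
by congr TMono; apply: funext => i; case: shiftP.
Qed.

Lemma invariant_split m k (g : cocycle G (m + k)) T :
  invariant g T -> (forall v, #|T v| = m) ->
  exists g1 g2, cohomologous g (tagged (dsum (existT _ m g1) (existT _ k g2)))
             /\ subdeg g T = deg (existT _ m g1).
Proof.
move=> g_inv card_T.
have [pi to_prefix] := fin_all_exists (fun v => perm_onto_prefix (T v)).
have {}to_prefix v j : (pi v j \in T v) = (j < m)%N by rewrite to_prefix card_T.
have T_tr : transport (fun v => perm_sec (pi v)) (prefix_fam m k) = T.
  apply: funext => v; apply/setP => i.
  by rewrite inE mem_prefix -(to_prefix v) /= permKV.
have gau := gauge_permute pi g.
have inv_pi : invariant (permute pi g) (prefix_fam m k).
  by apply/(invariant_transport _ gau); rewrite T_tr.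
have [g1 [g2 g_pi]] := prefix_invariant_dsum inv_pi.
exists g1, g2; split; first by rewrite -g_pi; exact: cohomologous_permute.
rewrite -T_tr -(subdeg_transport (fun v => harmonic_perm_sec v (pi v)) gau inv_pi) g_pi.
exact: (subdeg_prefix (existT _ m g1) (existT _ k g2)).
Qed.

Lemma invariant_decomposable (E : bundle G) T m : invariant (tagged E) T ->
  (forall v, #|T v| = m) -> (0 < m < rk E)%N -> ~ indecomposable E.
Proof.
case: E T => n g T /= g_inv card_T /andP [m_gt0 lt_mn]; apply.
have [k Ek] : exists k, n = (m + k)%N by exists (n - m)%N; rewrite subnKC // ltnW.
subst n; have [g1 [g2 [coh _]]] := invariant_split g_inv card_T.
exists (existT _ m g1), (existT _ k g2); split => //; first by rewrite /=; lia.
by exists (erefl (m + k)%N).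
Qed.

Lemma subbundle_dsum m k (g : cocycle G (m + k)) g1 g2 :
  cohomologous g (tagged (dsum (existT _ m g1) (existT _ k g2))) ->
  subbundle (existT _ m g1) (existT _ (m + k)%N g).
Proof.
move=> coh; exists (leq_addr k m), (tagged (dsum (existT _ m g1) (existT _ k g2))), g1.
split=> //; first exact: cohomologous_refl.
move=> e t _; have [ul [_ [_ dl]]] := tsum_block (g1 e) (g2 e) t.
split=> i j; first by rewrite -ul; congr tentry; apply: val_inj.
case: (shiftP (i : 'I_(m + k))) => i'; first by rewrite /rk /= leqNgt ltn_ord.
by move=> _; rewrite -(dl i' j); congr tentry; apply: val_inj.
Qed.

Lemma subbundle_invariant (F E : bundle G) : subbundle F E ->
  exists T, [/\ invariant (tagged E) T, forall v, #|T v| = rk F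
              & subdeg (tagged E) T = deg F].
Proof.
case: F E => m h0 [n gE] [/= le_mn [g' [h [coh_E coh_F blocks]]]].
have [k Ek] : exists k, n = (m + k)%N by exists (n - m)%N; rewrite subnKC.
subst n; have widenE (i : 'I_m) : widen_ord le_mn i = lshift k i by exact: val_inj.
have g'_inv : invariant g' (prefix_fam m k).
  move=> e i; have [ul ll] := blocks e _ (mid_in_edge e).
  rewrite !mem_prefix; case: shiftP => j.
    move: (congr1 isSome (ul j (tperm (h e) j))).
    by rewrite !isSome_tentry eqxx widenE => /eqP -> /=; rewrite ltn_ord.
  apply/esym/negbTE/negP => lt_m.
  move: (ll (rshift m j) (Ordinal lt_m) (leq_addr _ _)) => /(congr1 isSome).
  by rewrite isSome_tentry -val_eqE /= eqxx.
have [g1 [g2 g'E]] := prefix_invariant_dsum g'_inv; subst g'.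
have [phi [harm gau]] := (cohomologousP _ _).1 coh_E.
exists (transport phi (prefix_fam m k)); split.
- exact/(invariant_transport _ gau).
- by move=> v; rewrite card_transport card_prefix.
rewrite -(subdeg_transport harm gau g'_inv) (subdeg_prefix (existT _ m g1) (existT _ k g2)).
rewrite (cohomologous_deg coh_F).
apply: eq_bigr => e _; apply: eq_bigr => j _.
apply: (tentry_tslope (len_gt0 e)) => t t_in.
by rewrite -(proj1 (tsum_block (g1 e) (g2 e) t)) -!widenE (proj1 (blocks e t t_in)).
Qed.

Lemma invariant_subbundle (E : bundle G) T m : invariant (tagged E) T ->
  (forall v, #|T v| = m) -> (m <= rk E)%N ->
  exists F, [/\ subbundle F E, rk F = m & deg F = subdeg (tagged E) T].
Proof.
case: E T => n g T /= g_inv card_T le_mn.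
have [k Ek] : exists k, n = (m + k)%N by exists (n - m)%N; rewrite subnKC.
subst n; have [g1 [g2 [coh deg_T]]] := invariant_split g_inv card_T.
by exists (existT _ m g1); split => //; exact: subbundle_dsum coh.
Qed.

Lemma iso_rk (E D : bundle G) : iso E D -> rk E = rk D.
Proof. by case. Qed.

Lemma iso_deg (E D : bundle G) : iso E D -> deg E = deg D.
Proof. by case: E D => n g [n' g'] [/= en]; subst n'; exact: cohomologous_deg. Qed.

Lemma iso_slope (E D : bundle G) : iso E D -> slope E = slope D.
Proof. by move=> isoED; rewrite /slope (iso_deg isoED) (iso_rk isoED). Qed.

Lemma iso_invariant (E D : bundle G) U : iso E D -> invariant (tagged D) U ->
  exists T, [/\ invariant (tagged E) T, forall v, #|T v| = #|U v|
              & subdeg (tagged E) T = subdeg (tagged D) U].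
Proof.
case: E => n g; case: D U => n' g' U [/= en]; subst n'.
case/cohomologousP => phi [harm gau] U_inv; exists (transport phi U); split.
- exact/(invariant_transport _ gau).
- by move=> v; rewrite card_transport.
- by rewrite (subdeg_transport harm gau U_inv).
Qed.

Lemma iso_invariant_rev (E D : bundle G) T : iso E D -> invariant (tagged E) T ->
  exists U, [/\ invariant (tagged D) U, forall v, #|U v| = #|T v|
              & subdeg (tagged D) U = subdeg (tagged E) T].
Proof.
case: E T => n g T; case: D => n' g' [/= en]; subst n'.
case/cohomologousP => phi [harm gau] T_inv.
pose U v := [set k | hperm (phi v) k \in T v].
have U_tr : transport phi U = T.
  by apply: funext => v; apply/setP => k; rewrite !inE permKV.
have U_inv : invariant g' U by apply/(invariant_transport _ gau); rewrite U_tr.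
exists U; split => //.
- by move=> v; rewrite -(card_transport phi U) U_tr.
- by rewrite (subdeg_transport harm gau U_inv) U_tr.
Qed.

Lemma iso_invariant_subbundle (E D : bundle G) U m : iso E D ->
  invariant (tagged D) U -> (forall v, #|U v| = m) -> (m <= rk E)%N ->
  exists F, [/\ subbundle F E, rk F = m & deg F = subdeg (tagged D) U].
Proof.
move=> isoED U_inv card_U le_m.
have [T [T_inv card_T deg_T]] := iso_invariant isoED U_inv.
have card_Tm v : #|T v| = m by rewrite card_T card_U.
have [F [subF rkF degF]] := invariant_subbundle T_inv card_Tm le_m.
by exists F; rewrite degF deg_T.
Qed.

Lemma rk_dsum_fam r (Es : 'I_r -> bundle G) : rk (dsum_fam Es) = (\sum_i rk (Es i))%N.
Proof. by elim: r Es => [|r IH] Es; rewrite ?big_ord0 // big_ord_recl -IH. Qed.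

Lemma deg_dsum_fam r (Es : 'I_r -> bundle G) : deg (dsum_fam Es) = \sum_i deg (Es i).
Proof.
elim: r Es => [|r IH] Es; last by rewrite big_ord_recl -IH -deg_dsum.
by rewrite big_ord0 /deg big1 // => e _; rewrite big_ord0.
Qed.

Lemma dsum_fam_summand r (Es : 'I_r -> bundle G) (i : 'I_r) : exists U,
  [/\ invariant (tagged (dsum_fam Es)) U, forall v, #|U v| = rk (Es i)
    & subdeg (tagged (dsum_fam Es)) U = deg (Es i)].
Proof.
elim: r Es i => [|r IH] Es i; first by case: i.
case: (unliftP ord0 i) => [j ->|->]; last first.
  exists (prefix_fam _ _); split; [exact: invariant_prefix | exact: card_prefix |].
  exact: subdeg_prefix.
have [U [U_inv card_U deg_U]] := IH (fun j => Es (lift ord0 j)) j.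
exists (cat_fam (empty_fam _) U); split.
- exact/invariant_cat/U_inv/invariant_empty.
- by move=> v; rewrite card_cat cards0 card_U.
- by rewrite subdeg_cat subdeg_empty add0r deg_U.
Qed.

Lemma deg_slope (X : bundle G) : (0 < rk X)%N ->
  (deg X)%:~R = slope X * (rk X)%:R :> rat.
Proof. by move=> rk_gt0; rewrite /slope divfK // pnatr_eq0 -lt0n. Qed.

Lemma slope_eq (X : bundle G) mu : (0 < rk X)%N ->
  (deg X)%:~R = mu * (rk X)%:R :> rat -> slope X = mu.
Proof.
move=> rk_gt0 degX; apply: (@mulIf _ (rk X)%:R); first by rewrite pnatr_eq0 -lt0n.
by rewrite -deg_slope.
Qed.

Lemma stable_indecomposable (E : bundle G) : stable E -> indecomposable E.
Proof.
move=> stE [A [B [rkA_gt0 rkB_gt0 isoE]]].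
have rkE : rk E = (rk A + rk B)%N := iso_rk isoE.
have leA : (rk A <= rk E)%N by rewrite rkE leq_addr.
have leB : (rk B <= rk E)%N by rewrite rkE leq_addl.
have [FA [subA rkFA degFA]] :=
  iso_invariant_subbundle isoE (@invariant_prefix A B) (card_prefix (rk A) (rk B)) leA.
have [FB [subB rkFB degFB]] :=
  iso_invariant_subbundle isoE (@invariant_suffix A B) (card_suffix (rk A) (rk B)) leB.
have ltA : slope FA < slope E by apply: stE subA; rewrite rkFA rkE; apply/andP; split; lia.
have ltB : slope FB < slope E by apply: stE subB; rewrite rkFB rkE; apply/andP; split; lia.
move: ltA ltB; rewrite (iso_slope isoE) /slope rkFA rkFB degFA degFB.
rewrite subdeg_prefix subdeg_suffix deg_dsum /= natrD intrD => ltA ltB.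
have a_gt0 : 0 < (rk A)%:R :> rat by rewrite ltr0n.
have b_gt0 : 0 < (rk B)%:R :> rat by rewrite ltr0n.
by have := lt_trans ltB (mediant_lt a_gt0 b_gt0 ltA); rewrite ltxx.
Qed.

Lemma indecomposable_stable (E : bundle G) : indecomposable E -> stable E.
Proof.
move=> indec F rkF subF; have [T [T_inv card_T _]] := subbundle_invariant subF.
by case: (invariant_decomposable T_inv card_T rkF).
Qed.

Lemma semistable_eq_slope r (Es : 'I_r -> bundle G) (E : bundle G) :
  (0 < rk E)%N -> (forall i, 0 < rk (Es i))%N -> iso E (dsum_fam Es) ->
  semistable E -> forall i, slope (Es i) = slope E.
Proof.
move=> rkE_gt0 rk_gt0 isoE ssE.
apply: (eq_of_weighted_mean (w := fun i => (rk (Es i))%:R)) => [i|i|].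
- by rewrite ltr0n.
- have [U [U_inv card_U deg_U]] := dsum_fam_summand Es i.
  have le_rk : (rk (Es i) <= rk E)%N.
    by rewrite (iso_rk isoE) rk_dsum_fam (bigD1 i) //= leq_addr.
  have [F [subF rkF degF]] := iso_invariant_subbundle isoE U_inv card_U le_rk.
  by move: (ssE F); rewrite /slope rkF degF deg_U; apply => //; rewrite rkF.
under eq_bigr => i _ do rewrite -deg_slope //.
rewrite -natr_sum -rk_dsum_fam -(iso_rk isoE) -deg_slope //.
by rewrite (iso_deg isoE) deg_dsum_fam rmorph_sum.
Qed.

Hypothesis connected : forall u v : vert G, connect (@adjacent R G) u v.
Hypothesis vert_gt0 : (0 < #|vert G|)%N.

Lemma invariant_card n (g : cocycle G n) S : invariant g S -> forall u v, #|S u| = #|S v|.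
Proof.
move=> S_inv.
have edge_card e : #|S (src e)| = #|S (tgt e)|.
  rewrite -(card_preimset (S (tgt e)) (@perm_inj _ (tperm (g e)))).
  by apply: eq_card => i; rewrite inE S_inv.
have adj_card u v : adjacent u v -> #|S u| = #|S v|.
  by case/existsP => e /orP[] /andP[/eqP <- /eqP <-]; rewrite edge_card.
move=> u v; case/connectP: (connected u v) => p p_path ->.
by elim: p u p_path => [|w p IH] u //= /andP[/adj_card -> /IH].
Qed.

Lemma indecomposable_invariant (E : bundle G) U : indecomposable E ->
  invariant (tagged E) U -> U = empty_fam _ \/ U = full_fam _.
Proof.
move=> indec U_inv; have /card_gt0P [v0 _] := vert_gt0.
have card_U v : #|U v| = #|U v0| := invariant_card U_inv v v0.
case: (posnP #|U v0|) => [U0|U_gt0].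
  by left; apply: funext => v; apply: cards0_eq; rewrite card_U.
case: (ltnP #|U v0| (rk E)) => [lt_rk|ge_rk].
  by case: (invariant_decomposable U_inv card_U _ indec); rewrite U_gt0 lt_rk.
right; apply: funext => v; apply/eqP.
by rewrite eqEcard subsetT cardsT card_ord card_U.
Qed.

Lemma indecomposable_subdeg (E : bundle G) U v :
  indecomposable E -> (0 < rk E)%N -> invariant (tagged E) U ->
  (subdeg (tagged E) U)%:~R = slope E * #|U v|%:R :> rat.
Proof.
move=> indec rk_gt0 /(indecomposable_invariant indec) [->|->].
  by rewrite subdeg_empty cards0 mulr0.
by rewrite subdeg_full cardsT card_ord -deg_slope.
Qed.

Lemma subdeg_dsum_fam r (Es : 'I_r -> bundle G) mu U v :
  (forall i, indecomposable (Es i)) -> (forall i, 0 < rk (Es i))%N ->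
  (forall i, slope (Es i) = mu) -> invariant (tagged (dsum_fam Es)) U ->
  (subdeg (tagged (dsum_fam Es)) U)%:~R = mu * #|U v|%:R :> rat.
Proof.
elim: r Es U => [|r IH] Es U indec rk_gt0 slopes U_inv.
  have -> : #|U v| = 0%N.
    by apply/eqP; rewrite -leqn0 -[X in (_ <= X)%N](card_ord 0) max_card.
  by rewrite mulr0 /subdeg big1 // => e _; apply: big1 => -[].
have [A_inv B_inv] := invariant_lrfam U_inv.
rewrite subdeg_dsum card_lrfam intrD natrD mulrDr.
rewrite (IH _ _ (fun j => indec _) (fun j => rk_gt0 _) (fun j => slopes _) B_inv).
by rewrite (indecomposable_subdeg v (indec ord0) (rk_gt0 ord0) A_inv) slopes.
Qed.

Lemma eq_slope_semistable r (Es : 'I_r -> bundle G) (E : bundle G) mu :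
  (0 < rk E)%N -> (forall i, 0 < rk (Es i))%N -> (forall i, indecomposable (Es i)) ->
  (forall i, slope (Es i) = mu) -> iso E (dsum_fam Es) -> semistable E.
Proof.
move=> rkE_gt0 rk_gt0 indec slopes isoE F rkF_gt0 subF.
have /card_gt0P [v _] := vert_gt0.
have [T [T_inv card_T deg_T]] := subbundle_invariant subF.
have [U [U_inv card_U deg_U]] := iso_invariant_rev isoE T_inv.
have rkD_gt0 : (0 < rk (dsum_fam Es))%N by rewrite -(iso_rk isoE).
rewrite (slope_eq (mu := mu) rkF_gt0); last first.
  by rewrite -deg_T -deg_U (subdeg_dsum_fam v indec rk_gt0 slopes U_inv) card_U card_T.
rewrite (iso_slope isoE) (slope_eq (mu := mu) rkD_gt0) // -subdeg_full.
by rewrite (subdeg_dsum_fam v indec rk_gt0 slopes (invariant_full _)) cardsT card_ord.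
Qed.

End Bundles.

Theorem proposition5p2 (R : realType) (G : model R)
  (HG : simple_connected_model G) :
  (forall E : bundle G, (0 < rk E)%N -> (stable E <-> indecomposable E)) /\
  (forall (E : bundle G) (r : nat) (Es : 'I_r -> bundle G),
      (0 < rk E)%N ->
      (forall i, (0 < rk (Es i))%N) ->
      (forall i, indecomposable (Es i)) ->
      iso E (dsum_fam Es) ->
      (semistable E <-> forall i j : 'I_r, slope (Es i) = slope (Es j))).
Proof.
case: HG => len_gt0 src_neq_tgt _ connected vert_gt0; split.
  move=> E _; split; first exact: (stable_indecomposable len_gt0 src_neq_tgt).
  exact: (indecomposable_stable len_gt0 src_neq_tgt).
move=> E r Es rkE_gt0 rk_gt0 indec isoE; split.
  move=> ssE i j.
  by rewrite !(semistable_eq_slope len_gt0 src_neq_tgt rkE_gt0 rk_gt0 isoE ssE).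
move=> eq_slopes.
have [mu slopes] : exists mu, forall i, slope (Es i) = mu.
  case: r Es eq_slopes {rk_gt0 indec isoE} => [|r] Es eq_slopes; first by exists 0 => -[].
  by exists (slope (Es ord0)).
exact: (eq_slope_semistable len_gt0 src_neq_tgt connected vert_gt0
          rkE_gt0 rk_gt0 indec slopes isoE).
Qed.
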